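(* Let $n\ge 3$ and $q\ge 2$ be integers, $S_1=\sqrt{q^2+4(q-1)(n-2)}$, $S_2=\sqrt{q^2+4(q-1)(n-3)}$. Let $d$ be an integer and define $j$ by $d=n-1-\frac{n-2+j}{q}$, with $j\in\left[\frac{S_1-q}{2},\frac{S_2+q}{2}-1\right)$, and put $s=1-\frac{2d}{n}$. Let $d_0=n-1-\frac{(j-q+1)(n-2)}{qj}$, let $e$ be the unique rational number in $(0,1]$ such that $b:=d_0+e$ is an integer, and define $$f(t)=(t+1)\Big(t-1+\tfrac{2b}{n}\Big)\Big(t-1+\tfrac{2(b-1)}{n}\Big)(t-s)=\sum_{i=0}^4 f_iQ_i^{(n,q)}(t).$$ Provided $f_i\ge 0$ for $i=1,2,3,4$, we have $$A_q(n,s)\le\frac{q^3b(b-1)\big(n(q-1)-j-q+2\big)}{(1-j)q^2b^2+C_1qb-C_2},$$ where $C_1=j(q-1)(2n-1)+j-q$ and $C_2=(q-1)(n-1)[(q-1)(j+1)n+2(j-q+1)]$.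
   Context: $K_i^{(n,q)}(z)=\sum_{l=0}^{i}(-1)^l(q-1)^{i-l}\binom{z}{l}\binom{n-z}{i-l}$, $r_i=(q-1)^i\binom{n}{i}$, $Q_i^{(n,q)}(t)=\frac{1}{r_i}K_i^{(n,q)}\!\big(\tfrac{n(1-t)}{2}\big)$; real polynomials of degree $\le n$ have a unique expansion in the $Q_i^{(n,q)}$. $A_q(n,s)$ is the maximum cardinality of a code $C$ in the $q$-ary Hamming space of length $n$ with $1-\frac{2d(x,y)}{n}\le s$ for all distinct $x,y\in C$, $d$ the Hamming distance. *)

From HB Require Import structures.
From mathcomp Require Import all_boot all_order all_algebra.
Set Implicit Arguments. Unset Strict Implicit. Unset Printing Implicit Defensive.
Import Order.TTheory GRing.Theory Num.Theory.
Local Open Scope ring_scope.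

Definition word (n q : nat) := {ffun 'I_n -> 'I_q}.

Definition hdist (n q : nat) (x y : word n q) : nat := #|[set i | x i != y i]|.

Definition is_s_code (R : numFieldType) (n q : nat) (s : R) (C : {set word n q}) : bool :=
  [forall x in C, forall y in C,
     (x != y) ==> (1 - 2 * (hdist x y)%:R / n%:R <= s)].

Definition Aq (R : numFieldType) (n q : nat) (s : R) : nat :=
  \max_(C : {set word n q} | is_s_code s C) #|C|.

Definition binpoly (R : fieldType) (p : {poly R}) (l : nat) : {poly R} :=
  (l`!%:R)^-1 *: \prod_(k < l) (p - (k%:R)%:P).

Definition kraw (R : fieldType) (n q i : nat) : {poly R} :=
  \sum_(l < i.+1) (((-1) ^+ l * (q%:R - 1) ^+ (i - l)) *:
     (binpoly 'X l * binpoly ((n%:R)%:P - 'X) (i - l))).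

Definition rcoef (R : fieldType) (n q i : nat) : R := (q%:R - 1) ^+ i * ('C(n, i))%:R.

Definition Qpoly (R : fieldType) (n q i : nat) : {poly R} :=
  (rcoef R n q i)^-1 *: (kraw R n q i \Po ((n%:R / 2)%:P * (1 - 'X))).

(* Delsarte's linear programming bound for the quartic f.  For words x, y at
   distance z, K_i(z) is the i-th coefficient of prod_m (1 + kappa(x_m, y_m) X) with
   kappa(a, b) = q [a = b] - 1.  Since kappa is a positive semidefinite kernel, so is
   every coefficient of the product, whence sum_{x,y in C} f(1 - 2 d(x,y)/n) >= f_0 |C|^2
   when f_i >= 0 for i >= 1.  Since (b - z)(b - 1 - z) >= 0 for integers, f <= 0 at every
   distance z >= d, so the same double sum is at most |C| f(1), and |C| <= f(1) / f_0.
   Averaging over y, f_0 q^n = sum_y f(1 - 2 d(x,y)/n); expanding the quartic in the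
   binomials C(z, k) and using sum_y C(d(x,y), k) = q^n C(n, k) ((q-1)/q)^k gives
   f_0 = 16 den / (q^4 n^3), where den is the denominator of the bound.  It is positive
   for j in the given window and b - d0 in (0, 1], and f(1) / f_0 is the bound. *)

From HB Require Import structures.
From mathcomp Require Import all_boot all_order all_algebra.
From mathcomp Require Import ring lra.
Import Order.TTheory GRing.Theory Num.Theory.
Local Open Scope ring_scope.

Set Implicit Arguments. Unset Strict Implicit. Unset Printing Implicit Defensive.

(** * Krawtchouk values as coefficients of a product *)

Lemma natr_bin (R : numFieldType) (N l : nat) :
  ('C(N, l))%:R = (l`!%:R : R)^-1 * \prod_(k < l) (N%:R - k%:R).
Proof.
have fn0 : (l`!%:R : R) != 0 by rewrite pnatr_eq0 -lt0n fact_gt0.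
apply: (canRL (mulKf fn0)).
case: (leqP l N) => hl.
  rewrite -natrM mulnC bin_ffact ffact_prod natr_prod.
  by apply: eq_bigr => k _; rewrite natrB // ltnW // (leq_trans (ltn_ord k)).
by rewrite bin_small // mulr0 (bigD1 (Ordinal hl)) //= subrr mul0r.
Qed.

Lemma horner_binpoly (R : fieldType) (p : {poly R}) l x :
  (binpoly p l).[x] = (l`!%:R)^-1 * \prod_(k < l) (p.[x] - k%:R).
Proof.
rewrite /binpoly hornerZ horner_prod; congr (_ * _).
by apply: eq_bigr => k _; rewrite hornerD hornerN hornerC.
Qed.

Lemma coef_linear_exp (R : comNzRingType) (a c : R) N k :
  ((a%:P + c *: 'X) ^+ N)`_k = a ^+ (N - k) * c ^+ k *+ 'C(N, k).
Proof.
elim: N k => [|N IH] k.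
  by rewrite expr0 coefC; case: k => [|k]; rewrite ?bin0 ?bin0n /= ?mulr1.
rewrite exprS mulrDl -scalerAl coefD coefZ coefXM coefCM.
case: k => [|k] /=; first by rewrite IH mulr0 addr0 !bin0 subn0 exprS mulrA.
rewrite !IH binS mulrnDr subSS -!mulrnAr; congr (_ + _).
  have [ltkN | leNk] := ltnP k N; last by rewrite bin_small ?ltnS // !mulr0n !mulr0.
  by rewrite mulrA -exprS subnSK.
by rewrite mulrCA exprS -!mulrnAr.
Qed.

Definition agree_poly (R : ringType) n q (u v : R) (x y : word n q) : {poly R} :=
  \prod_(m < n) (1 + (if x m == y m then u else v) *: 'X).

Lemma hdist_le n q (x y : word n q) : (hdist x y <= n)%N.
Proof. by rewrite /hdist -[X in (_ <= X)%N]card_ord max_card. Qed.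

Lemma hdist_eq0 n q (x y : word n q) : (hdist x y == 0%N) = (x == y).
Proof.
rewrite cards_eq0; apply/eqP/eqP => [xy0 | ->]; last by apply/setP => i; rewrite !inE eqxx.
by apply/ffunP => i; apply/eqP; move/setP/(_ i): xy0; rewrite !inE => /negbFE.
Qed.

Lemma hdistxx n q (x : word n q) : hdist x x = 0%N.
Proof. by apply/eqP; rewrite hdist_eq0. Qed.

Lemma agree_polyE (R : comNzRingType) n q (u v : R) (x y : word n q) :
  agree_poly u v x y = (1 + v *: 'X) ^+ hdist x y * (1 + u *: 'X) ^+ (n - hdist x y).
Proof.
rewrite /agree_poly (bigID (fun m => x m != y m)) /=; congr (_ * _).
  rewrite (eq_bigr (fun _ => 1 + v *: 'X)) => [|m /negbTE -> //].
  by rewrite prodr_const /hdist cardsE.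
rewrite (eq_bigr (fun _ => 1 + u *: 'X)) => [|m /negPn -> //].
rewrite prodr_const; congr (_ ^+ _).
apply/eqP; rewrite -(eqn_add2l (hdist x y)) subnKC ?hdist_le //.
by rewrite /hdist cardsE cardC card_ord.
Qed.

Lemma sum_agree_poly (R : comNzRingType) n q (u v : R) (x : word n q) :
  \sum_(y : word n q) agree_poly u v x y = (q%:R%:P + (u + (q%:R - 1) * v) *: 'X) ^+ n.
Proof.
rewrite /agree_poly -(bigA_distr_bigA (fun m a => 1 + (if x m == a then u else v) *: 'X)).
rewrite /= (eq_bigr (fun _ => q%:R%:P + (u + (q%:R - 1) * v) *: 'X)).
  by rewrite prodr_const card_ord.
move=> m _; rewrite big_split /= -scaler_suml sumr_const card_ord -polyC1 -polyCMn.
congr (_ + _ *: 'X); rewrite (bigD1 (x m)) //= eqxx.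
rewrite (eq_bigr (fun _ => v)) => [|a /negbTE]; last by rewrite eq_sym => ->.
have q_gt0 : (0 < q)%N := leq_ltn_trans (leq0n _) (ltn_ord (x m)).
by rewrite sumr_const cardC1 card_ord mulrBl mul1r mulr_natl -subn1 mulrnBr.
Qed.

Lemma coef0_agree_poly (R : comNzRingType) n q (u v : R) (x y : word n q) :
  (agree_poly u v x y)`_0 = 1.
Proof. by rewrite -horner_coef0 horner_prod big1 // => m _; rewrite !hornerE. Qed.

Lemma horner_kraw_hdist (R : numFieldType) n q i (x y : word n q) :
  (kraw R n q i).[(hdist x y)%:R] = (agree_poly (q%:R - 1) (-1) x y)`_i.
Proof.
rewrite agree_polyE coefM /kraw horner_sum; apply: eq_bigr => l _.
rewrite hornerZ hornerM !horner_binpoly hornerD hornerN hornerC hornerX.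
rewrite -natrB ?hdist_le // -!natr_bin -polyC1 !coef_linear_exp !expr1n !mul1r.
by rewrite [in RHS]mulrnAl [in RHS]mulrnAr mulrA !mulr_natr -!mulrnA mulnC.
Qed.

Definition hinner (R : numFieldType) n q (x y : word n q) : R :=
  1 - 2 * (hdist x y)%:R / n%:R.

Lemma horner_Qpoly_hdist (R : numFieldType) n q i (x y : word n q) : (0 < n)%N ->
  (Qpoly R n q i).[hinner R x y] = (rcoef R n q i)^-1 * (agree_poly (q%:R - 1) (-1) x y)`_i.
Proof.
move=> n_gt0; have n0 : (n%:R : R) != 0 by rewrite pnatr_eq0 -lt0n.
rewrite /Qpoly hornerZ horner_comp -horner_kraw_hdist; congr (_ * (_).[_]).
by rewrite hornerCM !hornerE /hinner; field.
Qed.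

(** * Positive semidefinite kernels *)

Definition psd_kernel (R : numDomainType) (T : Type) (K : T -> T -> R) :=
  exists2 s : seq (R * (T -> R)), all (fun wg => 0 <= wg.1) s &
    forall x y, K x y = \sum_(wg <- s) wg.1 * (wg.2 x * wg.2 y).

Section PsdKernel.

Variables (R : realDomainType) (T : Type).
Implicit Types K : T -> T -> R.

Lemma eq_psd_kernel K1 K2 : K1 =2 K2 -> psd_kernel K1 -> psd_kernel K2.
Proof. by move=> eK [s s_ge0 eK1]; exists s => // x y; rewrite -eK. Qed.

Lemma psd_kernelD K1 K2 :
  psd_kernel K1 -> psd_kernel K2 -> psd_kernel (fun x y => K1 x y + K2 x y).
Proof.
move=> [s1 s1_ge0 eK1] [s2 s2_ge0 eK2]; exists (s1 ++ s2).
  by rewrite all_cat s1_ge0.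
by move=> x y; rewrite big_cat eK1 eK2.
Qed.

Lemma psd_kernelM K1 K2 :
  psd_kernel K1 -> psd_kernel K2 -> psd_kernel (fun x y => K1 x y * K2 x y).
Proof.
move=> [s1 s1_ge0 eK1] [s2 s2_ge0 eK2].
exists [seq (wg.1 * wh.1, fun z => wg.2 z * wh.2 z) | wg <- s1, wh <- s2].
  elim: s1 s1_ge0 {eK1} => //= wg s1 IH /andP [wg_ge0 /IH s1s2_ge0].
  rewrite all_cat s1s2_ge0 andbT all_map.
  by apply: sub_all s2_ge0 => wh /= wh_ge0; apply: mulr_ge0.
move=> x y; rewrite big_allpairs_dep eK1 eK2 mulr_suml; apply: eq_bigr => wg _.
by rewrite mulr_sumr; apply: eq_bigr => wh _ /=; ring.
Qed.

Lemma psd_kernel_coef_prod (I : Type) (r : seq I) (K : I -> T -> T -> R) i :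
  (forall m, psd_kernel (K m)) ->
  psd_kernel (fun x y => (\prod_(m <- r) (1 + K m x y *: 'X))`_i).
Proof.
move=> K_psd; elim: r i => [|m r IH] i.
  apply: (@eq_psd_kernel (fun _ _ => (i == 0%N)%:R)) => [x y|].
    by rewrite big_nil coef1.
  case: i => [|i].
    by exists [:: (1, fun=> 1)] => [|x y]; rewrite /= ?ler01 ?big_seq1 ?mul1r.
  by exists [::] => // x y; rewrite big_nil.
case: i => [|i].
  by apply: eq_psd_kernel (IH 0%N) => x y; rewrite big_cons mulrDl mul1r -scalerAl
    coefD coefZ coefXM mulr0 addr0.
apply: eq_psd_kernel (psd_kernelD (IH i.+1) (psd_kernelM (K_psd m) (IH i))) => x y.
by rewrite big_cons mulrDl mul1r -scalerAl coefD coefZ coefXM.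
Qed.

End PsdKernel.

Lemma psd_kernel_sum_ge0 (R : realDomainType) (T : finType) (K : T -> T -> R) (A : {pred T}) :
  psd_kernel K -> 0 <= \sum_(x in A) \sum_(y in A) K x y.
Proof.
move=> [s s_ge0 eK].
have -> : \sum_(x in A) \sum_(y in A) K x y =
          \sum_(wg <- s) wg.1 * (\sum_(x in A) wg.2 x) ^+ 2.
  under eq_bigr do under eq_bigr do rewrite eK.
  rewrite exchange_big /=; under [RHS]eq_bigr do rewrite expr2 mulr_suml mulr_sumr.
  under eq_bigr do rewrite exchange_big /=.
  rewrite exchange_big; apply: eq_bigr => wg _; apply: eq_bigr => x _.
  by rewrite mulr_sumr mulr_sumr; apply: eq_bigr => y _; ring.
elim: s s_ge0 {eK} => [|wg s IH] /=; first by rewrite big_nil.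
case/andP=> wg_ge0 /IH s_ge0; rewrite big_cons addr_ge0 //.
exact: mulr_ge0 (sqr_ge0 _).
Qed.

Lemma psd_kernel_agree (R : realFieldType) (T : Type) q (pi : T -> 'I_q) : (0 < q)%N ->
  psd_kernel (fun x y => if pi x == pi y then q%:R - 1 else -1 : R).
Proof.
move=> q_gt0; have q0 : (q%:R : R) != 0 by rewrite pnatr_eq0 -lt0n.
exists [seq (q%:R, fun z => (pi z == c)%:R - q%:R^-1) | c <- enum 'I_q].
  by rewrite all_map; apply/allP => c _ /=.
have delta_sum a (F : 'I_q -> R) : \sum_(c in 'I_q) (a == c)%:R * F c = F a.
  rewrite (bigD1 a) //= eqxx mul1r big1 ?addr0 // => c /negbTE.
  by rewrite eq_sym => ->; rewrite mul0r.
move=> x y; rewrite big_map big_enum /=.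
rewrite (eq_bigr (fun c => q%:R * ((pi x == c)%:R * (pi y == c)%:R)
  - (pi x == c)%:R * 1 - (pi y == c)%:R * 1 + q%:R^-1)) => [|c _]; last by field.
rewrite !big_split /= !sumrN -mulr_sumr !delta_sum sumr_const card_ord.
rewrite -[q%:R^-1 *+ q]mulr_natr mulVf // eq_sym.
by case: eqP => _; rewrite ?mulr1 ?mulr0; ring.
Qed.

Lemma kraw_pair_sum_ge0 (R : realFieldType) n q i (A : {pred word n q}) : (0 < q)%N ->
  0 <= \sum_(x in A) \sum_(y in A) (agree_poly (q%:R - 1) (-1 : R) x y)`_i.
Proof.
move=> q_gt0; apply/psd_kernel_sum_ge0/psd_kernel_coef_prod => m.
exact: psd_kernel_agree (fun x : word n q => x m) q_gt0.
Qed.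

(** * Delsarte's linear programming bound *)

Lemma rcoef0 (R : fieldType) n q : rcoef R n q 0 = 1.
Proof. by rewrite /rcoef expr0 bin0 mul1r. Qed.

Lemma rcoef_ge0 (R : numFieldType) n q i : (0 < q)%N -> 0 <= rcoef R n q i.
Proof. by move=> q_gt0; rewrite mulr_ge0 ?exprn_ge0 // subr_ge0 ler1n. Qed.

Section Delsarte.

Variables (R : realFieldType) (n q k : nat) (fc : 'I_k.+1 -> R) (f : {poly R}).
Hypotheses (n_gt0 : (0 < n)%N) (q_gt0 : (0 < q)%N).
Hypothesis f_Qexp : f = \sum_(i < k.+1) fc i *: Qpoly R n q i.

Lemma horner_Qexp_hdist (x y : word n q) :
  f.[hinner R x y] =
  \sum_(i < k.+1) fc i * (rcoef R n q i)^-1 * (agree_poly (q%:R - 1) (-1) x y)`_i.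
Proof.
rewrite f_Qexp horner_sum; apply: eq_bigr => i _.
by rewrite hornerZ horner_Qpoly_hdist // mulrA.
Qed.

Lemma sum_horner_hdist (x : word n q) :
  \sum_(y : word n q) f.[hinner R x y] = fc ord0 * q%:R ^+ n.
Proof.
have mean_coef i :
    \sum_(y : word n q) (agree_poly (q%:R - 1) (-1 : R) x y)`_i = q%:R ^+ n *+ (i == 0%N).
  by rewrite -coef_sum sum_agree_poly mulrN1 subrr scale0r addr0 -polyC_exp coefC; case: eqP.
under eq_bigr do rewrite horner_Qexp_hdist.
rewrite exchange_big /=; under eq_bigr do rewrite -mulr_sumr mean_coef.
rewrite big_ord_recl big1 => [|i _]; last by rewrite mulr0n mulr0.
by rewrite rcoef0 invr1 mulr1 addr0.
Qed.

Hypothesis fc_ge0 : forall i : 'I_k.+1, (0 < i)%N -> 0 <= fc i.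

Lemma pair_sum_horner_ge (A : {pred word n q}) :
  fc ord0 * #|A|%:R ^+ 2 <= \sum_(x in A) \sum_(y in A) f.[hinner R x y].
Proof.
have -> : \sum_(x in A) \sum_(y in A) f.[hinner R x y] =
    \sum_(i < k.+1) fc i * (rcoef R n q i)^-1 *
      \sum_(x in A) \sum_(y in A) (agree_poly (q%:R - 1) (-1) x y)`_i.
  under eq_bigr do under eq_bigr do rewrite horner_Qexp_hdist.
  under eq_bigr do rewrite exchange_big /=.
  rewrite exchange_big /=; apply: eq_bigr => i _.
  by rewrite mulr_sumr; apply: eq_bigr => x _; rewrite mulr_sumr.
rewrite big_ord_recl /= rcoef0 invr1 mulr1.
under eq_bigr do under eq_bigr do rewrite coef0_agree_poly.
rewrite !sumr_const expr2 mulr_natr lerDl.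
apply: sumr_ge0 => i _; rewrite !mulr_ge0 ?invr_ge0 ?rcoef_ge0 ?kraw_pair_sum_ge0 //.
exact: fc_ge0.
Qed.

End Delsarte.

Lemma pair_sum_horner_le (R : numFieldType) n q (f : {poly R}) (A : {pred word n q}) :
  {in A &, forall x y, x != y -> f.[hinner R x y] <= 0} ->
  \sum_(x in A) \sum_(y in A) f.[hinner R x y] <= #|A|%:R * f.[1].
Proof.
move=> f_le0; rewrite mulr_natl -(sumr_const A); apply: ler_sum => x xA.
rewrite (bigD1 x) //= {1}/hinner hdistxx.
rewrite mulr0 mul0r subr0 gerDl -oppr_ge0 -sumrN.
by apply: sumr_ge0 => y /andP [yA yx]; rewrite oppr_ge0 f_le0 // eq_sym.
Qed.

Theorem Aq_le_delsarte (R : realFieldType) n q k (fc : 'I_k.+1 -> R) (f : {poly R}) (s : R) :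
  (0 < n)%N -> (0 < q)%N ->
  f = \sum_(i < k.+1) fc i *: Qpoly R n q i ->
  (forall i : 'I_k.+1, (0 < i)%N -> 0 <= fc i) -> 0 < fc ord0 ->
  (forall z, (0 < z <= n)%N -> 1 - 2 * z%:R / n%:R <= s -> f.[1 - 2 * z%:R / n%:R] <= 0) ->
  (Aq n q s)%:R <= f.[1] / fc ord0.
Proof.
move=> n_gt0 q_gt0 f_Qexp fc_ge0 fc0_gt0 f_le0.
have code_bound (C : {set word n q}) :
    is_s_code s C -> fc ord0 * #|C|%:R ^+ 2 <= #|C|%:R * f.[1].
  move=> /forall_inP C_code.
  apply: le_trans (pair_sum_horner_ge n_gt0 q_gt0 f_Qexp fc_ge0 C) (pair_sum_horner_le _).
  move=> x y xC yC xy; apply: f_le0; first by rewrite lt0n hdist_eq0 xy hdist_le.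
  by move/forall_inP/(_ y yC)/implyP: (C_code x xC); apply.
have fc0_le : fc ord0 <= f.[1].
  pose x0 : word n q := [ffun => Ordinal q_gt0].
  have := code_bound [set x0]; rewrite cards1 expr1n mulr1 mul1r; apply.
  by apply/forall_inP => x /set1P ->; apply/forall_inP => y /set1P ->; rewrite eqxx.
have bound_ge0 : 0 <= f.[1] / fc ord0.
  exact: divr_ge0 (le_trans (ltW fc0_gt0) fc0_le) (ltW fc0_gt0).
rewrite /Aq; apply: (big_ind (fun m : nat => m%:R <= f.[1] / fc ord0)) => //.
  by move=> m1 m2 h1 h2; rewrite /maxn; case: ifP.
move=> C /code_bound; have [->|C_gt0] := posnP #|C|; first by [].
rewrite expr2 mulrCA ler_pM2l ?ltr0n // => C_le.
by rewrite ler_pdivlMr // mulrC.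
Qed.

(** * Binomial moments and the quartic test polynomial *)

Definition fdelta (R : zmodType) (g : nat -> R) (i : nat) : R := g i.+1 - g i.

Lemma newton_deg4 (R : numFieldType) (p : {poly R}) N : (size p <= 5)%N ->
  p.[N%:R] = \sum_(k < 5) iter k (@fdelta R) (fun i => p.[i%:R]) 0%N * ('C(N, k))%:R.
Proof.
move=> sp; rewrite !big_ord_recr !big_ord0 /= !(natr_bin _ N) /fdelta.
rewrite !(horner_coef_wide _ sp) !big_ord_recr !big_ord0 /=.
by rewrite !factS fact0; field.
Qed.

Lemma sum_bin_hdist (R : numFieldType) n q (x : word n q) k : (0 < q)%N ->
  \sum_(y : word n q) ('C(hdist x y, k))%:R =
  q%:R ^+ n * ('C(n, k))%:R * ((q%:R - 1) / q%:R : R) ^+ k.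
Proof.
move=> q_gt0; have q0 : (q%:R : R) != 0 by rewrite pnatr_eq0 -lt0n.
have binE y : ('C(hdist x y, k))%:R = (agree_poly 0 (1 : R) x y)`_k.
  by rewrite agree_polyE scale0r addr0 expr1n mulr1 -polyC1 coef_linear_exp !expr1n mulr1.
under eq_bigr do rewrite binE.
rewrite -coef_sum sum_agree_poly add0r mulr1 coef_linear_exp.
have [le_kn | lt_nk] := leqP k n; last by rewrite bin_small // !mulr0n mulr0 mul0r.
rewrite (exprB le_kn) ?unitfE // expr_div_n -[_ *+ 'C(n, k)]mulr_natr.
by field; rewrite expf_neq0.
Qed.

Lemma sum_horner_hdist_deg4 (R : numFieldType) n q (x : word n q) (p : {poly R}) :
  (0 < q)%N -> (size p <= 5)%N ->
  \sum_(y : word n q) p.[(hdist x y)%:R] = q%:R ^+ n *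
    \sum_(k < 5)
      iter k (@fdelta R) (fun i => p.[i%:R]) 0%N * ('C(n, k))%:R * ((q%:R - 1) / q%:R) ^+ k.
Proof.
move=> q_gt0 sp; under eq_bigr do rewrite (newton_deg4 _ sp).
rewrite exchange_big mulr_sumr; apply: eq_bigr => k _.
by rewrite -mulr_sumr sum_bin_hdist //; ring.
Qed.

Section LPPolynomial.

Variable R : numFieldType.
Implicit Types n q b d j z : R.

Definition lp_poly n b d : {poly R} :=
  ('X + 1) * ('X + (-1 + 2 * b / n)%:P) * ('X + (-1 + 2 * (b - 1) / n)%:P)
  * ('X - (1 - 2 * d / n)%:P).

Definition lp_quartic n b d : {poly R} := \prod_(a <- [:: n; b; b - 1; d]) ('X - a%:P).

Definition lp_den n q b j : R :=
  (1 - j) * q ^+ 2 * b ^+ 2 + (j * (q - 1) * (2 * n - 1) + j - q) * q * b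
  - (q - 1) * (n - 1) * ((q - 1) * (j + 1) * n + 2 * (j - q + 1)).

Lemma size_lp_quartic n b d : size (lp_quartic n b d) = 5%N.
Proof. by rewrite size_prod_XsubC. Qed.

Lemma horner_lp_quartic n b d z :
  (lp_quartic n b d).[z] = (n - z) * (b - z) * (b - 1 - z) * (d - z).
Proof. by rewrite /lp_quartic !big_cons big_nil mulr1 !hornerM !hornerXsubC; ring. Qed.

Lemma horner_lp_poly n b d z : n != 0 ->
  (lp_poly n b d).[1 - 2 * z / n] = 16 / n ^+ 4 * (lp_quartic n b d).[z].
Proof.
move=> n0; rewrite horner_lp_quartic /lp_poly !hornerM !(hornerD, hornerN, hornerX, hornerC).
by field.
Qed.

Lemma horner_lp_poly1 n b d : n != 0 -> (lp_poly n b d).[1] = 16 / n ^+ 3 * (b * (b - 1) * d).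
Proof.
move=> n0; have := horner_lp_poly b d 0 n0.
by rewrite mulr0 mul0r subr0 horner_lp_quartic => ->; field.
Qed.

Lemma lp_quartic_binomial_mean N q b d : N%:R != 0 :> R -> q != 0 ->
  16 / N%:R ^+ 4 * (\sum_(k < 5) iter k (@fdelta R) (fun i => (lp_quartic N%:R b d).[i%:R]) 0%N
    * ('C(N, k))%:R * ((q - 1) / q) ^+ k) * (q ^+ 4 * N%:R ^+ 3)
  = 16 * lp_den N%:R q b (q * (N%:R - 1 - d) - (N%:R - 2)).
Proof.
move=> N0 q0; rewrite !big_ord_recr big_ord0 /= /fdelta !horner_lp_quartic !(natr_bin _ N).
rewrite !big_ord_recr !big_ord0 /= !factS fact0 /lp_den.
by field; rewrite q0 N0.
Qed.

End LPPolynomial.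

Lemma lp_poly_Qcoef0 (R : realFieldType) N q (b d : R) (fc : 'I_5 -> R) :
  (0 < N)%N -> (0 < q)%N ->
  lp_poly N%:R b d = \sum_(i < 5) fc i *: Qpoly R N q i ->
  fc ord0 * (q%:R ^+ 4 * N%:R ^+ 3) = 16 * lp_den N%:R q%:R b (q%:R * (N%:R - 1 - d) - (N%:R - 2)).
Proof.
move=> N_gt0 q_gt0 f_Qexp; have N0 : N%:R != 0 :> R by rewrite pnatr_eq0 -lt0n.
have q0 : q%:R != 0 :> R by rewrite pnatr_eq0 -lt0n.
have := sum_horner_hdist N_gt0 f_Qexp [ffun => Ordinal q_gt0].
under eq_bigr do rewrite horner_lp_poly //.
rewrite -mulr_sumr sum_horner_hdist_deg4 ?size_lp_quartic // mulrCA [RHS]mulrC => mean.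
by rewrite -(mulfI (expf_neq0 N q0) mean) lp_quartic_binomial_mean.
Qed.

Lemma intr_mul_subr1_ge0 (R : realDomainType) (w : int) : 0 <= (w%:~R : R) * (w%:~R - 1).
Proof.
have [w_ge1 | w_lt1] := lerP 1 w.
  by apply: mulr_ge0; rewrite ?subr_ge0 ?ler1z ?ler0z // (le_trans _ w_ge1).
by apply: mulr_le0; rewrite ?subr_le0 ?lerz1 ?lerz0 ?(ltW w_lt1) // -ltzD1.
Qed.

Lemma lp_poly_le0 (R : realFieldType) N z (b : int) (d : R) : (0 < N)%N -> (z <= N)%N ->
  1 - 2 * z%:R / N%:R <= 1 - 2 * d / N%:R -> (lp_poly N%:R b%:~R d).[1 - 2 * z%:R / N%:R] <= 0.
Proof.
move=> N_gt0 z_le z_s; have d_le : d <= z%:R.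
  by move: z_s; rewrite lerD2l lerN2 -!mulrA ler_pM2l // ler_pM2r // invr_gt0 ltr0n.
rewrite horner_lp_poly ?pnatr_eq0 -?lt0n // horner_lp_quartic.
have := intr_mul_subr1_ge0 R (b - z%:Z); rewrite intrB -pmulrn => consec.
apply: mulr_ge0_le0; first by rewrite divr_ge0 ?exprn_ge0.
rewrite -[_ * _ * (_ - 1 - _)]mulrA [_ - 1 - _]addrAC.
apply: mulr_ge0_le0; last by rewrite subr_le0.
by apply: mulr_ge0; rewrite // subr_ge0 ler_nat.
Qed.

Lemma quadratic_window (R : rcfType) (q A j : R) : 0 <= q -> 0 < A ->
  let S := Num.sqrt (q ^+ 2 + 4 * A) in
  (S - q) / 2 <= j -> j < (S + q) / 2 -> 0 < j /\ 0 < A + q * j - j ^+ 2.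
Proof.
move=> q_ge0 A_gt0 S j_ge j_lt.
have S_ge0 : 0 <= S by rewrite sqrtr_ge0.
have S2 : S ^+ 2 = q ^+ 2 + 4 * A by rewrite sqr_sqrtr //; nra.
have q_lt_S : q < S by nra.
split; first lra.
have : 0 < (S - (2 * j - q)) * (S + (2 * j - q)) by apply: mulr_gt0; lra.
nra.
Qed.

Lemma lp_param_bounds (R : rcfType) (n q : nat) (d : int) : (3 <= n)%N -> (2 <= q)%N ->
  let nR : R := n%:R in let qR : R := q%:R in
  let j := qR * (nR - 1 - d%:~R) - (nR - 2) in
  (Num.sqrt (qR ^+ 2 + 4 * (qR - 1) * (nR - 2)) - qR) / 2 <= j ->
  j < (Num.sqrt (qR ^+ 2 + 4 * (qR - 1) * (nR - 3)) + qR) / 2 - 1 ->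
  1 <= j /\ 0 < (qR - 1) * (nR - 2) + qR * j - j ^+ 2.
Proof.
move=> n_ge3 q_ge2 nR qR j j_ge j_lt.
have nR_ge3 : 3 <= nR by rewrite ler_nat.
have qR_ge2 : 2 <= qR by rewrite ler_nat.
have S_le : Num.sqrt (qR ^+ 2 + 4 * (qR - 1) * (nR - 3)) <=
            Num.sqrt (qR ^+ 2 + 4 * (qR - 1) * (nR - 2)) by apply: ler_wsqrtr; lra.
have [j_gt0 ->] : 0 < j /\ 0 < (qR - 1) * (nR - 2) + qR * j - j ^+ 2.
  by apply: quadratic_window; rewrite ?mulrA; [lra | apply: mulr_gt0; lra | lra | lra].
have jE : j = (q%:Z * (n%:Z - 1 - d) - (n%:Z - 2))%:~R by rewrite /j !(intrB, intrM).
by move: j_gt0; rewrite jE ltr0z ler1z.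
Qed.

Lemma lp_den_gt0 (R : realFieldType) (n q b j : R) : 2 <= q -> 3 <= n -> 1 <= j ->
  0 < (q - 1) * (n - 2) + q * j - j ^+ 2 ->
  0 < b - (n - 1 - (j - q + 1) * (n - 2) / (q * j)) ->
  b - (n - 1 - (j - q + 1) * (n - 2) / (q * j)) <= 1 ->
  0 < lp_den n q b j.
Proof.
move=> q_ge2 n_ge3 j_ge1; set A := (q - 1) * (n - 2); set X := A + q * j - j ^+ 2.
set e := b - _ => X_gt0 e_gt0 e_le1.
have qj_gt0 : 0 < q * j by apply: mulr_gt0; lra.
have decomp : lp_den n q b j * (q * j) ^+ 2 =
    q ^+ 2 * ((1 - e) * (q - 1) * (j + 1) * (n - 2) * X + e * X * ((j + 1) * A + 2 * q * j))
    + q ^+ 4 * j ^+ 2 * (j - 1) * e * (1 - e).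
  by rewrite /e /X /A /lp_den; field; rewrite !gt_eqF //; lra.
rewrite -(pmulr_lgt0 _ (exprn_gt0 2 qj_gt0)) decomp.
have A_gt0 : 0 < A by apply: mulr_gt0; lra.
apply: ltr_wpDr; first by rewrite !mulr_ge0 ?exprn_ge0 //; lra.
apply: mulr_gt0; first by apply: exprn_gt0; lra.
apply: ltr_wpDl; first by rewrite !mulr_ge0 //; lra.
by rewrite !mulr_gt0 //; nra.
Qed.

Theorem theorem5 (R : rcfType) (n q : nat) (d b : int) (fc : 'I_5 -> R) :
  (3 <= n)%N -> (2 <= q)%N ->
  let nR : R := n%:R in
  let qR : R := q%:R in
  let S1 : R := Num.sqrt (qR ^+ 2 + 4 * (qR - 1) * (nR - 2)) in
  let S2 : R := Num.sqrt (qR ^+ 2 + 4 * (qR - 1) * (nR - 3)) in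
  (* j is defined by d = n - 1 - (n - 2 + j) / q *)
  let j : R := qR * (nR - 1 - d%:~R) - (nR - 2) in
  (S1 - qR) / 2 <= j -> j < (S2 + qR) / 2 - 1 ->
  let s : R := 1 - 2 * d%:~R / nR in
  let d0 : R := nR - 1 - (j - qR + 1) * (nR - 2) / (qR * j) in
  (* b = d0 + e with e in (0,1] *)
  0 < b%:~R - d0 -> b%:~R - d0 <= 1 ->
  let bR : R := b%:~R in
  let f : {poly R} :=
    ('X + 1) * ('X + (-1 + 2 * bR / nR)%:P) * ('X + (-1 + 2 * (bR - 1) / nR)%:P)
    * ('X - s%:P) in
  f = \sum_(i < 5) fc i *: Qpoly R n q i ->
  (forall i : 'I_5, (0 < i)%N -> 0 <= fc i) ->
  let C1 : R := j * (qR - 1) * (2 * nR - 1) + j - qR in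
  let C2 : R := (qR - 1) * (nR - 1) * ((qR - 1) * (j + 1) * nR + 2 * (j - qR + 1)) in
  (Aq n q s)%:R <=
    qR ^+ 3 * bR * (bR - 1) * (nR * (qR - 1) - j - qR + 2) /
    ((1 - j) * qR ^+ 2 * bR ^+ 2 + C1 * qR * bR - C2).

Proof.
move=> n_ge3 q_ge2 nR qR S1 S2 j j_ge j_lt s d0 e_gt0 e_le1 bR f f_Qexp fc_ge0.
change ((Aq n q s)%:R <=
  qR ^+ 3 * bR * (bR - 1) * (nR * (qR - 1) - j - qR + 2) / lp_den nR qR bR j).
have n_gt0 : (0 < n)%N by apply: leq_trans n_ge3.
have q_gt0 : (0 < q)%N by apply: leq_trans q_ge2.
have [j_ge1 X_gt0] := lp_param_bounds n_ge3 q_ge2 j_ge j_lt.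
have den_gt0 : 0 < lp_den nR qR bR j.
  by apply: lp_den_gt0 e_gt0 e_le1; rewrite ?ler_nat.
have qn_gt0 : 0 < qR ^+ 4 * nR ^+ 3 by rewrite mulr_gt0 // exprn_gt0 // ltr0n.
have fc0E : fc ord0 * (qR ^+ 4 * nR ^+ 3) = 16 * lp_den nR qR bR j.
  exact: lp_poly_Qcoef0 n_gt0 q_gt0 f_Qexp.
have fc0_gt0 : 0 < fc ord0 by rewrite -(pmulr_lgt0 _ qn_gt0) fc0E mulr_gt0.
have -> : qR ^+ 3 * bR * (bR - 1) * (nR * (qR - 1) - j - qR + 2) / lp_den nR qR bR j =
    f.[1] / fc ord0.
  rewrite horner_lp_poly1 ?pnatr_eq0 -?lt0n // (canRL (mulfK (lt0r_neq0 qn_gt0)) fc0E) /j.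
  by field; rewrite !pnatr_eq0 -!lt0n n_gt0 q_gt0 lt0r_neq0.
apply: (Aq_le_delsarte n_gt0 q_gt0 f_Qexp fc_ge0 fc0_gt0) => z /andP [_ z_le].
exact: lp_poly_le0.
Qed.
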